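(* A ring $R$ is strongly nil-clean if and only if $R$ is a CSNC ring and $R$ is semi-potent.
   Context: All rings are associative with identity $1$. For a ring $R$, $\mathrm{Id}(R)$, $U(R)$, $\mathrm{Nil}(R)$ denote the sets of idempotents, units and nilpotent elements, and $J(R)$ the Jacobson radical. An element $a\in R$ is clean if $a=e+u$ for some $e\in\mathrm{Id}(R)$, $u\in U(R)$. An element $a$ is strongly nil-clean if $a=e+q$ with $e\in \mathrm{Id}(R)$, $q\in\mathrm{Nil}(R)$ and $eq=qe$; the ring $R$ is strongly nil-clean if every element is strongly nil-clean. A ring $R$ is called CSNC if every clean element of $R$ is strongly nil-clean. A ring $R$ is semi-potent if every one-sided ideal of $R$ not contained in $J(R)$ contains a nonzero idempotent. *)

From mathcomp Require Import all_boot all_algebra.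
Set Implicit Arguments. Unset Strict Implicit. Unset Printing Implicit Defensive.
Import GRing.Theory.
Local Open Scope ring_scope.

Section RingDefs.
Variable R : pzRingType.

Definition idem (e : R) : Prop := e * e = e.
Definition unitP (u : R) : Prop := exists v : R, u * v = 1 /\ v * u = 1.
Definition nilp (q : R) : Prop := exists n : nat, q ^+ n = 0.

Definition clean_elt (a : R) : Prop :=
  exists e u, idem e /\ unitP u /\ a = e + u.
Definition sn_clean_elt (a : R) : Prop :=
  exists e q, idem e /\ nilp q /\ a = e + q /\ e * q = q * e.

Definition strongly_nil_clean : Prop := forall a : R, sn_clean_elt a.
Definition CSNC : Prop := forall a : R, clean_elt a -> sn_clean_elt a.

Definition additive_subgroup (I : R -> Prop) : Prop :=
  I 0 /\ (forall x y, I x -> I y -> I (x - y)).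
Definition left_ideal (I : R -> Prop) : Prop :=
  additive_subgroup I /\ (forall r x, I x -> I (r * x)).
Definition right_ideal (I : R -> Prop) : Prop :=
  additive_subgroup I /\ (forall r x, I x -> I (x * r)).

Definition maximal_left_ideal (M : R -> Prop) : Prop :=
  left_ideal M /\ (exists x, ~ M x) /\
  (forall N, left_ideal N -> (forall x, M x -> N x) ->
     (forall x, N x <-> M x) \/ (forall x, N x)).

Definition jacobson (x : R) : Prop :=
  forall M, maximal_left_ideal M -> M x.

Definition semi_potent : Prop :=
  forall I : R -> Prop, (left_ideal I \/ right_ideal I) ->
    ~ (forall x, I x -> jacobson x) ->
    exists e, I e /\ idem e /\ e <> 0.

End RingDefs.

(* Forward: for [x] outside [J(R)] some [1 - r x] has no left inverse, so [r x]
   (and [x r]) is not nilpotent; the idempotent of its strongly nil-clean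
   decomposition is then nonzero and lies in the one-sided ideal of [x].
   Backward: in a CSNC ring every unit [u] is clean, hence [u - 1] is
   nilpotent; so [2] and [J(R)] are nil and [3] is a unit.  A nonzero system of
   2 x 2 matrix units would carry a unit of order 3 that is not unipotent;
   with semi-potency this forces [x] into [J(R)] whenever [e x = x] and
   [x e = 0] for an idempotent [e].  From this, [a - a^2] lies in [J(R)], hence
   is nilpotent, and the idempotent [a] mod [a - a^2] lifts to a commuting
   strongly nil-clean decomposition of [a]. *)

From HB Require Import structures.
From mathcomp Require Import all_boot all_algebra ring.
From mathcomp Require classical_sets.
From Stdlib Require Import Classical.
Set Implicit Arguments. Unset Strict Implicit. Unset Printing Implicit Defensive.
Import GRing.Theory.
Local Open Scope ring_scope.

Section Nilpotent.
Variable R : pzRingType.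
Implicit Types x y e q u c : R.

Lemma nilpN q : nilp (- q) <-> nilp q.
Proof.
suff nilpN1 x : nilp x -> nilp (- x) by split=> /nilpN1; rewrite ?opprK.
by case=> n xn; exists n; rewrite exprNn xn mulr0.
Qed.

Lemma nilpM_comm x y : GRing.comm x y -> nilp x -> nilp (x * y).
Proof. by move=> cxy [n xn]; exists n; rewrite exprMn_comm // xn mul0r. Qed.

Lemma nilpMC x y : nilp (x * y) -> nilp (y * x).
Proof.
case=> n xyn; exists n.+1.
suff -> : (y * x) ^+ n.+1 = y * (x * y) ^+ n * x by rewrite xyn mulr0 mul0r.
elim: n {xyn} => [|n IHn]; first by rewrite expr1 expr0 mulr1.
by rewrite exprS IHn [in RHS]exprS !mulrA.
Qed.

Lemma idem_nilp_eq0 e : idem e -> nilp e -> e = 0.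
Proof.
move=> ee [n en]; suff <- : e ^+ n.+1 = e by rewrite exprSr en mul0r.
by elim: n {en} => [|n IHn]; rewrite ?expr1 // exprS IHn.
Qed.

Lemma unitP_1B q : nilp q -> unitP (1 - q).
Proof.
case=> n qn; exists (\sum_(i < n) q ^+ i).
have c1q : GRing.comm (1 - q) (\sum_(i < n) q ^+ i).
  by apply: commr_sum => i _; apply/commrX/commr_sym/commrB; [apply: commr1|].
have qgeom : (1 - q) * \sum_(i < n) q ^+ i = 1.
  by apply: oppr_inj; rewrite -mulNr opprB -subrX1 qn sub0r.
by split; rewrite -?c1q.
Qed.

Lemma unitP_1D q : nilp q -> unitP (1 + q).
Proof. by rewrite -nilpN => /unitP_1B; rewrite opprK. Qed.

Lemma nilp_unitMl u c : unitP u -> GRing.comm u c -> nilp (u * c) -> nilp c.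
Proof.
move=> [v [uv vu]] cuc [n ucn]; exists n.
have cvu : GRing.comm v u by rewrite /GRing.comm uv vu.
by rewrite -[c ^+ n]mul1r -(expr1n _ n) -vu exprMn_comm // -mulrA -exprMn_comm // ucn mulr0.
Qed.

(* [y e = e y = (1 + q) e] and [1 + q] is a unit. *)
Lemma sn_clean_idem_factor y e q : idem e -> nilp q -> y = e + q -> e * q = q * e ->
  (exists v, e = v * y) /\ (exists w, e = y * w).
Proof.
move=> ee nq -> ceq; have [u [qu uq]] := unitP_1D nq.
have ey : e * (e + q) = (1 + q) * e by rewrite mulrDr ee ceq mulrDl mul1r.
have ye : (e + q) * e = e * (1 + q) by rewrite mulrDl ee -ceq mulrDr mulr1.
split; [exists (u * e) | exists (e * u)].
  by rewrite -mulrA ey mulrA uq mul1r.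
by rewrite mulrA ye -mulrA qu mulr1.
Qed.

End Nilpotent.

Section Ideals.
Variable R : pzRingType.
Implicit Types (x y r m : R) (I M N : R -> Prop).

Lemma additive_subgroupD I x y : additive_subgroup I -> I x -> I y -> I (x + y).
Proof.
by case=> I0 IB Ix Iy; rewrite -[y]opprK -[- y]sub0r; apply/IB/IB.
Qed.

Lemma maximal_left_ideal_1 M : maximal_left_ideal M -> ~ M 1.
Proof. by case=> [[_ MM] [[z Mz] _]] M1; apply: Mz; rewrite -[z]mulr1; apply: MM. Qed.

Lemma maximal_left_ideal_comax M x : maximal_left_ideal M -> ~ M x ->
  exists m r, M m /\ 1 = m + r * x.
Proof.
move=> [[[M0 MB] MM] [_ Mmax]] Mx.
pose N z := exists m r, M m /\ z = m + r * x.
have idN : left_ideal N.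
  split; first split.
  - by exists 0, 0; rewrite mul0r addr0.
  - move=> _ _ [m1 [r1 [Mm1 ->]]] [m2 [r2 [Mm2 ->]]].
    by exists (m1 - m2), (r1 - r2); rewrite mulrBl opprD addrACA; split=> //; apply: MB.
  - move=> t _ [m [r [Mm ->]]]; exists (t * m), (t * r).
    by rewrite mulrDr mulrA; split=> //; apply: MM.
have MN z : M z -> N z by exists z, 0; rewrite mul0r addr0.
case: (Mmax N idN MN) => [NM | N1]; last by have [m [r]] := N1 1; exists m, r.
by case: Mx; apply/NM; exists 0, 1; rewrite mul1r add0r.
Qed.

Section Krull.
Variable N : R -> Prop.
Hypotheses (idN : left_ideal N) (N1 : ~ N 1).

Let proper_over I := left_ideal I /\ (forall x, N x -> I x) /\ ~ I 1.
Let zorn_pred (I : classical_sets.set R) := proper_over I \/ (forall x, ~ I x).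

(* The empty set is allowed so that the union of the empty chain qualifies. *)
Let zorn_pred_bigcup (F : classical_sets.set (classical_sets.set R)) :
  (forall I, F I -> zorn_pred I) -> classical_sets.total_on F classical_sets.subset ->
  zorn_pred (classical_sets.bigcup F (fun I => I)).
Proof.
move=> FP Ftot.
have [[z [I0 [FI0 I0z]]] | empty] := classic (exists z I, F I /\ I z); last first.
  by right=> z [I FI Iz]; apply: empty; exists z, I.
have proper_of I x : F I -> I x -> proper_over I.
  by move=> FI Ix; case: (FP I FI) => // /(_ x).
have [_ [NI0 _]] := proper_of _ _ FI0 I0z.
left; split; first split; first split.
- by exists I0 => //; apply/NI0; case: idN => [[]].
- move=> x y [Ix FIx Ixx] [Iy FIy Iyy].
  have [sub | sub] := Ftot _ _ FIx FIy.
    have [[[_ IB] _] _] := proper_of _ _ FIy Iyy.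
    by exists Iy => //; apply: IB => //; apply: sub.
  have [[[_ IB] _] _] := proper_of _ _ FIx Ixx.
  by exists Ix => //; apply: IB => //; apply: sub.
- move=> r x [I FI Ix]; have [[_ IM] _] := proper_of _ _ FI Ix.
  by exists I => //; apply: IM.
split; first by move=> x Nx; exists I0 => //; apply: NI0.
by move=> [I FI I1]; have [_ [_]] := proper_of _ _ FI I1.
Qed.

Lemma proper_left_ideal_maximal :
  exists M, maximal_left_ideal M /\ (forall x, N x -> M x).
Proof.
have [M [PM Mmax]] := classical_sets.Zorn_bigcup zorn_pred_bigcup.
have [[idM [NM M1]] | M0] := PM; last first.
  exfalso; apply: (Mmax N); last by left.
  split=> [x /M0 // | NM]; apply: (M0 0); apply: NM; by case: idN => [[]].
exists M; split=> //; split=> //; split; first by exists 1.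
move=> I [[I0 IB] IM] MI; have [I1 | I1] := classic (I 1).
  by right=> z; rewrite -[z]mulr1; apply: IM.
left=> x; split=> [Ix | /MI //]; apply: NNPP => Mx; apply: (Mmax I).
  by split=> // IM'; apply/Mx/IM'.
by left; split=> //; split=> // z /NM; apply: MI.
Qed.

End Krull.
End Ideals.

Section Jacobson.
Variable R : pzRingType.
Implicit Types x y e j r t u n : R.

Lemma jacobsonP x : jacobson x <-> forall r, exists v, v * (1 - r * x) = 1.
Proof.
split=> [Jx r | linv M maxM].
  apply: NNPP => noinv; pose N z := exists t, z = t * (1 - r * x).
  have idN : left_ideal N.
    split; first split.
    - by exists 0; rewrite mul0r.
    - by move=> _ _ [t1 ->] [t2 ->]; exists (t1 - t2); rewrite mulrBl.
    - by move=> s _ [t ->]; exists (s * t); rewrite mulrA.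
  have [|M [maxM NM]] := proper_left_ideal_maximal idN.
    by case=> t t1; apply: noinv; exists t.
  have [[[M0 MB] MM] _] := maxM; apply: (maximal_left_ideal_1 maxM).
  rewrite -(subrK (r * x) 1); apply: (additive_subgroupD (conj M0 MB)).
    by apply: NM; exists 1; rewrite mul1r.
  by apply/MM/(Jx M maxM).
apply: NNPP => Mx; have [m [r [Mm mrx]]] := maximal_left_ideal_comax maxM Mx.
have [v vm] := linv r; apply: (maximal_left_ideal_1 maxM).
by rewrite -vm mrx addrK; case: maxM => [[_ MM] _]; apply: MM.
Qed.

Lemma jacobson0 : jacobson (0 : R).
Proof. by move=> M [[[]]]. Qed.

Lemma jacobsonB x y : jacobson x -> jacobson y -> jacobson (x - y).
Proof.
move=> Jx Jy M maxM; case: (maxM) => [[[_ MB] _] _].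
by apply: MB; [exact: Jx M maxM | exact: Jy M maxM].
Qed.

Lemma jacobsonN x : jacobson x -> jacobson (- x).
Proof. by move=> Jx; rewrite -sub0r; exact: jacobsonB jacobson0 Jx. Qed.

Lemma jacobsonD x y : jacobson x -> jacobson y -> jacobson (x + y).
Proof. by move=> Jx /jacobsonN Jy; rewrite -[y]opprK; apply: jacobsonB. Qed.

Lemma jacobsonMl t x : jacobson x -> jacobson (t * x).
Proof. by move=> Jx M maxM; case: (maxM) => [[_ MM] _]; apply/MM/(Jx M maxM). Qed.

(* A left inverse [v] of [1 - t r x] yields the left inverse [1 + r x v t]
   of [1 - r x t]. *)
Lemma jacobsonMr x t : jacobson x -> jacobson (x * t).
Proof.
move=> /jacobsonP Jx; apply/jacobsonP => r; have [v vx] := Jx (t * r).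
have tswap : t * (1 - r * (x * t)) = (1 - t * r * x) * t.
  by rewrite mulrBr mulrBl mulr1 mul1r !mulrA.
exists (1 + r * x * v * t); rewrite mulrDl mul1r -(mulrA _ t) tswap.
by rewrite [r * x * v * _]mulrA -(mulrA (r * x)) vx mulr1 -mulrA subrK.
Qed.

Lemma jacobson_unitP_1B j : jacobson j -> unitP (1 - j).
Proof.
move=> /jacobsonP Jj; have [v vj] := Jj 1; rewrite mul1r in vj.
have [w wv] : exists w, w * v = 1.
  have v1 : 1 + v * j = v by rewrite -{1}vj mulrBr mulr1 subrK.
  by have [w] := Jj (- v); rewrite mulNr opprK v1; exists w.
have wj : w = 1 - j by rewrite -[w]mulr1 -{1}vj mulrA wv mul1r.
by exists v; split; rewrite // -wj.
Qed.

Lemma jacobson_idem_eq0 e : jacobson e -> idem e -> e = 0.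
Proof.
move=> /jacobsonP Je ee; have [v ve] := Je 1; rewrite mul1r in ve.
by rewrite -[e]mul1r -ve -mulrA mulrBl mul1r ee subrr mulr0.
Qed.

(* Modulo [J(R)], [e = u n = u e n = u^2 n^2 = ...], which eventually vanishes. *)
Lemma jacobson_nilp_factor u n e :
  jacobson (u * n - e) -> u * e = u -> nilp n -> jacobson e.
Proof.
move=> Jun ue [N nN].
have Jpow i : jacobson (u ^+ i.+1 * n ^+ i.+1 - e).
  elim: i => [|i IHi]; first by rewrite !expr1.
  have -> : u ^+ i.+2 * n ^+ i.+2 - e = u * (u ^+ i.+1 * n ^+ i.+1 - e) * n + (u * n - e).
    by rewrite exprS [n ^+ i.+2]exprSr mulrBr mulrBl ue !mulrA addrA subrK.
  by apply: jacobsonD Jun; apply: jacobsonMr; apply: jacobsonMl.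
by have := Jpow N; rewrite [n ^+ N.+1]exprSr nN mul0r mulr0 sub0r => /jacobsonN; rewrite opprK.
Qed.

End Jacobson.

Section CSNC.
Variable R : pzRingType.
Hypothesis csncR : CSNC R.
Implicit Types x a b c e f g j u v w : R.

Lemma csnc_unipotent u : unitP u -> nilp (u - 1).
Proof.
move=> [v [uv vu]].
have [|e [q [ee [nq [ueq ceq]]]]] := csncR (a := u).
  by exists 0, u; rewrite add0r; split; [rewrite /idem mulr0 | split=> //; exists v].
have cuq : GRing.comm u q by rewrite /GRing.comm ueq mulrDl mulrDr ceq.
have cvq : GRing.comm v q.
  by rewrite /GRing.comm -[v * q]mulr1 -uv mulrA -(mulrA v) -cuq !mulrA vu mul1r.
have [w [vqw _]] : unitP (1 - v * q).
  by apply: unitP_1B; rewrite cvq; apply: nilpM_comm; first exact: commr_sym.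
have e_vq : e = u * (1 - v * q) by rewrite mulrBr mulr1 mulrA uv mul1r ueq addrK.
suff e1 : e = 1 by rewrite ueq e1 addrC addKr.
have ez : e * (w * v) = 1 by rewrite {1}e_vq -mulrA (mulrA _ w) vqw mul1r uv.
by rewrite -[e]mulr1 -ez mulrA ee.
Qed.

Lemma csnc_nilp2 : nilp (2%:R : R).
Proof.
rewrite -nilpN (_ : - 2%:R = -1 - 1) ?opprD //.
by apply: csnc_unipotent; exists (-1); rewrite mulrNN mulr1.
Qed.

Lemma csnc_unitP3 : unitP (3%:R : R).
Proof. by have := unitP_1B (proj2 (nilpN _) csnc_nilp2); rewrite opprK -mulrS. Qed.

Lemma csnc_jacobson_nilp j : jacobson j -> nilp j.
Proof.
by move=> /jacobson_unitP_1B/csnc_unipotent; rewrite addrAC subrr add0r nilpN.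
Qed.

(* [w = (1 - g) + c] has order 3, so [w - 1 = c - g] is nilpotent; but
   [(c - g)^2 = -3 c] and 3 is a unit, so [c] is nilpotent and [g = c^3 = 0]. *)
Lemma csnc_cube_root_eq0 g c : idem g -> g * c = c -> c * g = c ->
  c * c = - (c + g) -> g = 0.
Proof.
move=> gg gc cg cc.
have c3 : c * (c * c) = g by rewrite cc mulrN mulrDr cc cg opprD opprK addrC addKr.
pose p := 1 - g; have pc : p * c = 0 by rewrite mulrBl mul1r gc subrr.
have cp : c * p = 0 by rewrite mulrBr mulr1 cg subrr.
have pp : p * p = p by rewrite mulrBl mul1r mulrBr mulr1 gg subrr subr0.
have pg : p + g = 1 by rewrite subrK.
clearbody p.
have ww : (p + c) * (p + c) = p + c * c.
  by rewrite mulrDl !mulrDr pp pc cp addr0 add0r.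
have uw : unitP (p + c).
  exists ((p + c) * (p + c)); rewrite ww; split.
    by rewrite mulrDl !mulrDr pp (mulrA p c c) pc mul0r cp c3 addr0 add0r pg.
  by rewrite mulrDl !mulrDr pp pc -(mulrA c c p) cp mulr0 -(mulrA c c c) c3 addr0 add0r pg.
have ncg : nilp (c - g).
  by have := csnc_unipotent uw; rewrite -pg opprD addrA [p + c]addrC addrK.
have cg2 : (c - g) * (c - g) = - (3%:R * c).
  rewrite mulrBl !mulrBr cc cg gc gg mulr_natl !mulrS mulr0n addr0.
  rewrite opprB [- (c + g)]opprD [LHS]addrA [_ - c + g]addrAC subrK.
  by rewrite !opprD addrA.
have /nilpN : nilp (- (3%:R * c)) by rewrite -cg2; apply: nilpM_comm.
move=> /(nilp_unitMl csnc_unitP3 (commr_sym (commr_nat c 3))) [n cn].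
apply: idem_nilp_eq0 => //; exists n.
by rewrite -c3 -expr2 -exprS exprAC cn expr0n.
Qed.

(* [f], [h = b a], [a], [b] form a system of 2 x 2 matrix units, and
   [c = b - a - h] plays the matrix [[0, -1], [1, -1]] of order 3. *)
Lemma csnc_matrix_units_eq0 f a b : idem f -> a * b = f -> f * a = a -> b * f = b ->
  a * f = 0 -> f * b = 0 -> f = 0.
Proof.
move=> ff ab fa bf af fb; pose h := b * a.
have aa : a * a = 0 by rewrite -{2}fa mulrA af mul0r.
have bb : b * b = 0 by rewrite -{1}bf -mulrA fb mulr0.
have hh : h * h = h by rewrite /h mulrA -(mulrA b a b) ab bf.
have fh : f * h = 0 by rewrite /h mulrA fb mul0r.
have hf : h * f = 0 by rewrite /h -mulrA af mulr0.
have ah : a * h = a by rewrite /h mulrA ab fa.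
have hb : h * b = b by rewrite /h -mulrA ab bf.
have ha : h * a = 0 by rewrite /h -mulrA aa mulr0.
have bh : b * h = 0 by rewrite /h mulrA bb mul0r.
have ba : b * a = h by [].
clearbody h.
have gg : idem (f + h) by rewrite /idem mulrDl !mulrDr ff hh fh hf addr0 add0r.
have g0 : f + h = 0.
  apply: (csnc_cube_root_eq0 (c := b - a - h) gg).
  - by rewrite mulrDl !mulrBr fb fa fh hb ha hh sub0r !subr0 addrCA addrA.
  - by rewrite !mulrBl !mulrDr bf bh af ah hf hh !addr0 !add0r.
  rewrite !mulrBl !mulrBr bb ba bh ab aa ah hb ha hh !sub0r !subr0.
  have e1 : h + (f - a) + (b - h) = b + (f - a) by rewrite addrC addrA subrK.
  have e2 : b - a - h + (f + h) = b + (f - a).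
    by rewrite addrACA addNr addr0 -addrA [- a + f]addrC.
  by rewrite e2 -e1 !opprD.
by have := congr1 (fun z => f * z) g0; rewrite mulrDr ff fh addr0 mulr0.
Qed.

Hypothesis spR : semi_potent R.

(* A nonzero idempotent [x t0] in [x R] would give matrix units
   [f = x t0 e], [a = f x], [b = (1 - e) t0 e f]. *)
Lemma jacobson_idem_annihilated e x : idem e -> e * x = x -> x * e = 0 -> jacobson x.
Proof.
move=> ee ex xe; apply: NNPP => Jx.
have [p [[t0 ->] [pp p_neq0]]] :
    exists p, (exists t, p = x * t) /\ idem p /\ p <> 0.
  apply: spR.
- right; split; first split.
  + by exists 0; rewrite mulr0.
  + by move=> _ _ [t1 ->] [t2 ->]; exists (t1 - t2); rewrite mulrBr.
  + by move=> s _ [t ->]; exists (t * s); rewrite mulrA.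
- by move=> JxR; apply: Jx; apply: JxR; exists 1; rewrite mulr1.
pose f := x * t0 * e.
have ff : f * f = f.
  by rewrite /f !mulrA -(mulrA (x * t0) e x) ex -(mulrA (x * t0) x t0) pp.
have ef : e * f = f by rewrite /f !mulrA ex.
have fe : f * e = f by rewrite /f -mulrA ee.
have [e' [xe' fe']] : exists e' : R, x * e' = x /\ f * e' = 0.
  by exists (1 - e); rewrite !mulrBr !mulr1 xe fe subr0 subrr.
have xf : x * t0 * e = f by [].
clearbody f.
have f0 : f = 0.
  apply: (@csnc_matrix_units_eq0 f (f * x) (e' * t0 * e * f)) => //.
  - by rewrite !mulrA -(mulrA f x e') xe' -(mulrA f x t0) -(mulrA f _ e) xf ff ff.
  - by rewrite mulrA ff.
  - by rewrite -mulrA ff.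
  - by rewrite -mulrA -{2}ef (mulrA x e f) xe mul0r mulr0.
  - by rewrite !mulrA fe' !mul0r.
apply: p_neq0; rewrite -pp -{2}ex !mulrA.
by rewrite xf f0 !mul0r.
Qed.

(* [p = w v] is idempotent with [p w = w], so [w (1 - p)] and hence
   [1 - p = v w (1 - p)] lie in [J(R)]. *)
Lemma rinv_of_linv w v : v * w = 1 -> w * v = 1.
Proof.
move=> vw; pose p := w * v.
have pp : idem p by rewrite /idem /p -mulrA (mulrA v w) vw mul1r.
have pw : p * w = w by rewrite /p -mulrA vw mulr1.
have Jw1p : jacobson (w * (1 - p)).
  apply: (jacobson_idem_annihilated pp); first by rewrite mulrA pw.
  by rewrite -mulrA mulrBl mul1r pp subrr mulr0.
have J1p : jacobson (1 - p) by have := jacobsonMl v Jw1p; rewrite mulrA vw mul1r.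
have pp' : idem (1 - p) by rewrite /idem mulrBl mul1r mulrBr mulr1 pp subrr subr0.
by apply/eqP; rewrite eq_sym -subr_eq0; apply/eqP/jacobson_idem_eq0.
Qed.

(* Otherwise [R (a - a^2)] contains a nonzero idempotent [e = s (a - a^2)];
   as [(1 - e) a e] lies in [J(R)], [1 - a e] is a unit, so [a e] is nilpotent
   and [e] is congruent to [s (1 - a) e . a e] modulo [J(R)]. *)
Lemma jacobson_subr_sqr a : jacobson (a - a * a).
Proof.
apply: NNPP => Jb.
have [e [[s es] [ee e_neq0]]] :
    exists e, (exists t, e = t * (a - a * a)) /\ idem e /\ e <> 0.
  apply: spR.
  - left; split; first split.
    + by exists 0; rewrite mul0r.
    + by move=> _ _ [t1 ->] [t2 ->]; exists (t1 - t2); rewrite mulrBl.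
    + by move=> r _ [t ->]; exists (r * t); rewrite mulrA.
  - by move=> JRb; apply: Jb; apply: JRb; exists 1; rewrite mul1r.
have [e' [e'e' [ee' [e'e ee'1]]]] :
    exists e' : R, idem e' /\ e * e' = 0 /\ e' * e = 0 /\ e + e' = 1.
  exists (1 - e); rewrite /idem !mulrBl !mulrBr !mul1r !mulr1 ee subrr.
  by rewrite subr0 addrCA subrr addr0.
pose k := e' * a * e.
have Jk : jacobson k.
  apply: (jacobson_idem_annihilated e'e').
  - by rewrite /k !mulrA e'e'.
  - by rewrite /k -mulrA ee' mulr0.
have eae : e * a * e = a * e - k.
  by apply/eqP; rewrite eq_sym subr_eq /k -!mulrDl ee'1 mul1r.
pose y := s * a * e + e'.
have ye : y * e = s * a * e by rewrite /y mulrDl -mulrA ee e'e addr0.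
have ye' : y * e' = e' by rewrite /y mulrDl -mulrA ee' mulr0 e'e' add0r.
have yE : y = s * a * e + e' by [].
clearbody y.
have e'ae : e' * (a * e) = k by rewrite /k mulrA.
clearbody k.
have sae : s * a * e = e + s * a * a * e.
  by rewrite -{2}ee {2}es mulrBr mulrBl mulrA subrK.
have yw : y * (1 - a * e) = 1 - (1 - s * a) * k.
  rewrite yE mulrDl !mulrBr !mulr1 e'ae -[s * a * e * _]mulrA (mulrA e) eae.
  rewrite mulrBr [s * a * (a * e)]mulrA sae.
  by rewrite mulrBl mul1r -ee'1 addrKA opprK addrACA opprB.
have [v [_ vyw]] := jacobson_unitP_1B (jacobsonMl (1 - s * a) Jk).
rewrite -yw mulrA in vyw.
have /csnc_unipotent : unitP (1 - a * e).
  by exists (v * y); split=> //; apply: rinv_of_linv.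
rewrite addrAC subrr add0r nilpN => nae.
apply: e_neq0; apply: jacobson_idem_eq0 => //.
pose t := s * (1 - a).
have ta : t * a = e by rewrite /t -mulrA mulrBl mul1r -es.
clearbody t.
apply: (jacobson_nilp_factor (u := t * e) _ _ nae); last by rewrite -mulrA ee.
have -> : t * e * (a * e) - e = - (t * k).
  by rewrite -mulrA (mulrA e a e) eae mulrBr mulrA ta ee addrAC subrr add0r.
exact: jacobsonN (jacobsonMl t Jk).
Qed.

End CSNC.

(* Newton's iteration [E -> 3 E^2 - 2 E^3] for idempotents doubles the
   [(X - X^2)]-adic order of [E^2 - E] while keeping [E = X mod (X - X^2)]. *)
Lemma idem_lift_poly k : exists E P Q : {poly int},
  E * E - E = ('X - 'X * 'X) ^+ (2 ^ k) * Q /\ 'X - E = ('X - 'X * 'X) * P.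
Proof.
elim: k => [|k [E [P [Q [EQ EP]]]]].
  by exists 'X, 0, (-1); rewrite expn0 expr1; split; ring.
set d := 'X - 'X * 'X in EQ EP *.
have dk : d ^+ (2 ^ k) = d * d ^+ (2 ^ k).-1 by rewrite -exprS prednK // expn_gt0.
exists (3%:R * E * E - 2%:R * E * E * E), (P - d ^+ (2 ^ k).-1 * Q * (1 - 2%:R * E)),
  (- (Q * Q) * ((3%:R - 2%:R * E) * (1 + 2%:R * E))); split.
  have -> : d ^+ (2 ^ k.+1) = d ^+ (2 ^ k) * d ^+ (2 ^ k).
    by rewrite expnS mul2n -addnn exprD.
  have -> : (3%:R * E * E - 2%:R * E * E * E) * (3%:R * E * E - 2%:R * E * E * E)
      - (3%:R * E * E - 2%:R * E * E * E) =
      - ((E * E - E) * (E * E - E)) * ((3%:R - 2%:R * E) * (1 + 2%:R * E)) by ring.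
  by rewrite EQ; ring.
have -> : 'X - (3%:R * E * E - 2%:R * E * E * E) = ('X - E) - (E * E - E) * (1 - 2%:R * E).
  by ring.
by rewrite EQ EP dk; ring.
Qed.

Lemma nilp_subr_sqr_sn_clean_nz (R : nzRingType) (a : R) : nilp (a - a * a) -> sn_clean_elt a.
Proof.
case=> N abN.
have ca : commr_rmorph (intr : int -> R) a by move=> z; rewrite /GRing.comm mulrzl mulrzr.
have [E [P [Q [EQ EP]]]] := idem_lift_poly N.
have evX : horner_morph ca 'X = a by rewrite horner_morphX.
have evd : horner_morph ca ('X - 'X * 'X) = a - a * a by rewrite rmorphB rmorphM /= evX.
have ab2N : (a - a * a) ^+ (2 ^ N) = 0.
  have le : (N <= 2 ^ N)%N by apply/ltnW/ltn_expl.
  by rewrite -(subnK le) exprD abN mulr0.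
have evXE : a - horner_morph ca E = horner_morph ca ('X - E) by rewrite rmorphB /= evX.
exists (horner_morph ca E), (a - horner_morph ca E); split; last split; last split.
- apply/eqP; rewrite -subr_eq0; apply/eqP.
  by rewrite -rmorphM -rmorphB EQ rmorphM rmorphXn /= evd ab2N mul0r.
- by exists (2 ^ N)%N; rewrite evXE EP -rmorphXn exprMn rmorphM rmorphXn /= evd ab2N mul0r.
- by rewrite addrC subrK.
- by rewrite evXE -!rmorphM mulrC.
Qed.

(* [{poly R}] requires a nontrivial ring; the zero ring is handled directly. *)
Definition nz_ring_of (R : pzRingType) of (1 : R) != 0 : Type := R.
HB.instance Definition _ (R : pzRingType) (R1 : (1 : R) != 0) :=
  GRing.PzRing.on (nz_ring_of R1).
HB.instance Definition _ (R : pzRingType) (R1 : (1 : R) != 0) :=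
  GRing.PzSemiRing_isNonZero.Build (nz_ring_of R1) R1.

Lemma nilp_subr_sqr_sn_clean (R : pzRingType) (a : R) : nilp (a - a * a) -> sn_clean_elt a.
Proof.
have [R10 _ | R1] := eqVneq (1 : R) 0; last exact: (@nilp_subr_sqr_sn_clean_nz (nz_ring_of R1)).
have R0 (x : R) : x = 0 by rewrite -[x]mulr1 R10 mulr0.
exists 0, 0; rewrite /idem mulr0 (R0 a) addr0.
by split=> //; split=> //; exists 1%N; rewrite expr1.
Qed.

(* If [x] lies outside [J(R)] then some [1 - r x] has no left inverse, so
   [r x] and [x r] are not nilpotent and their idempotent parts are nonzero. *)
Lemma sn_clean_semi_potent (R : pzRingType) : strongly_nil_clean R -> semi_potent R.
Proof.
move=> snc I idI notJ.
have [x [Ix Jx]] : exists x, I x /\ ~ jacobson x.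
  by apply: NNPP => nox; apply: notJ => x Ix; apply: NNPP => Jx; apply: nox; exists x.
have [r noinv] : exists r, ~ exists v, v * (1 - r * x) = 1.
  by apply: NNPP => nor; apply/Jx/jacobsonP => r; apply: NNPP => noinv; apply: nor; exists r.
have rx_nnil : ~ nilp (r * x) by move=> /unitP_1B [v [_ vrx]]; apply: noinv; exists v.
case: idI => [[_ IM] | [_ IM]].
  have [e [q [ee [nq [rxE ceq]]]]] := snc (r * x).
  have [[v ev] _] := sn_clean_idem_factor ee nq rxE ceq.
  exists e; split; first by rewrite ev; apply/IM/IM.
  by split=> // e0; apply: rx_nnil; rewrite rxE e0 add0r.
have [e [q [ee [nq [xrE ceq]]]]] := snc (x * r).
have [_ [w ew]] := sn_clean_idem_factor ee nq xrE ceq.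
exists e; split; first by rewrite ew; apply/IM/IM.
by split=> // e0; apply/rx_nnil/nilpMC; rewrite xrE e0 add0r.
Qed.

Theorem mainTheorem5 (R : pzRingType) :
  strongly_nil_clean R <-> (CSNC R /\ semi_potent R).
Proof.
split=> [snc | [csnc sp] a].
  by split; [move=> a _; apply: snc | apply: sn_clean_semi_potent].
exact: nilp_subr_sqr_sn_clean (csnc_jacobson_nilp csnc (jacobson_subr_sqr csnc sp a)).
Qed.
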